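(* Let $G_1$ be a group, $n,m\ge0$, $G\le G_1^n$ a subgroup, $w(\bar x,\bar y)$ a group word in the variables $\bar x=(x_1,\dots,x_n)$, $\bar y=(y_1,\dots,y_m)$ and their inverses, and $\bar g\in G_1^m$, $c\in G_1$. If the set $\{\bar h\in G:w(\bar h,\bar g)=c\}$ is $2$-large in $G$, then $w(\bar h,\bar 1)=1$ for all $\bar h\in G\cap Z(G_1)^n$, where $\bar 1=(1,\dots,1)\in G_1^m$.
   Context: A subset $X\subseteq G$ is $2$-large in $G$ if $\bar aX\cap\bar bX\ne\emptyset$ for all $\bar a,\bar b\in G$. *)

(* groups are mathcomp's (possibly infinite) [groupType]
   from boot/monoid.v; G_1^n is the finite-function group {ffun 'I_n -> G1}
   (pointwise operations, instance provided by monoid.v). *)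
From HB Require Import structures.
From mathcomp Require Import all_boot.
Set Implicit Arguments. Unset Strict Implicit. Unset Printing Implicit Defensive.

Local Open Scope group_scope.

(* A letter of a group word in variables x_1..x_n (inl) and y_1..y_m (inr);
   the boolean flag [true] means the inverse of the variable. *)
Definition letter (n m : nat) : Type := (('I_n + 'I_m) * bool)%type.

Definition word (n m : nat) : Type := seq (letter n m).

Definition eval_letter (G1 : groupType) (n m : nat)
  (h : {ffun 'I_n -> G1}) (g : {ffun 'I_m -> G1}) (l : letter n m) : G1 :=
  let v := match l.1 with inl i => h i | inr j => g j end in
  if l.2 then v^-1 else v.

Definition eval_word (G1 : groupType) (n m : nat) (w : word n m)
  (h : {ffun 'I_n -> G1}) (g : {ffun 'I_m -> G1}) : G1 :=
  \prod_(l <- w) eval_letter h g l.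

Definition is_subgroup (T : groupType) (G : {pred T}) : Prop :=
  1 \in G /\ (forall x y, x \in G -> y \in G -> x * y^-1 \in G).

Definition two_large (T : groupType) (G X : {pred T}) : Prop :=
  {subset X <= G} /\
  forall a b, a \in G -> b \in G ->
    exists x y, [/\ x \in X, y \in X & a * x = b * y].

Definition in_center (G1 : groupType) (z : G1) : Prop :=
  forall y : G1, commute z y.

From mathcomp Require Import all_boot.
Local Open Scope group_scope.

(* Translation by a central tuple splits off a constant factor,
   w(z x, g) = w(z, 1) w(x, g).  By 2-largeness applied to the translates
   h X and X there are x, y in X with h x = y, so c = w(y, g) = w(h, 1) c. *)

Section CentralTranslation.

Variables (G1 : groupType) (n m : nat).

Lemma in_centerV (z : G1) : in_center z -> in_center z^-1.
Proof. by move=> zC y; apply/commute_sym/commuteV/commute_sym. Qed.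

Variable z : {ffun 'I_n -> G1}.
Hypothesis zZ : forall i, in_center (z i).

Lemma in_center_eval_letter (l : letter n m) :
  in_center (eval_letter z [ffun => 1] l).
Proof.
case: l => [[i|j] []]; rewrite /eval_letter /= ?ffunE ?invg1.
- exact/in_centerV.
- exact: zZ.
all: by move=> y; apply/commute_sym/commute1.
Qed.

Lemma eval_letter_mul_central (x : {ffun 'I_n -> G1}) (g : {ffun 'I_m -> G1})
    (l : letter n m) :
  eval_letter (z * x) g l = eval_letter z [ffun => 1] l * eval_letter x g l.
Proof.
case: l => [[i|j] []]; rewrite /eval_letter /= !ffunE ?invg1 ?mul1g //.
by rewrite invgM; apply/commute_sym/in_centerV.
Qed.

Lemma eval_word_mul_central (w : word n m) (x : {ffun 'I_n -> G1})
    (g : {ffun 'I_m -> G1}) :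
  eval_word w (z * x) g = eval_word w z [ffun => 1] * eval_word w x g.
Proof.
rewrite /eval_word (eq_bigr _ (fun l _ => eval_letter_mul_central x g l)).
by apply: prodgM_commute => l l' _ _; apply: in_center_eval_letter.
Qed.

End CentralTranslation.

Theorem theorem3p9 (G1 : groupType) (n m : nat)
  (G : {pred {ffun 'I_n -> G1}}) (w : word n m)
  (g : {ffun 'I_m -> G1}) (c : G1) :
  is_subgroup G ->
  two_large G [pred h | (h \in G) && (eval_word w h g == c)] ->
  forall h : {ffun 'I_n -> G1},
    h \in G -> (forall i, in_center (h i)) ->
    eval_word w h [ffun => 1] = 1.
Proof.
move=> [G_1 _] [_ largeX] h hG hZ.
have [x [y [/andP[_ /eqP wx] /andP[_ /eqP wy] hx_y]]] := largeX h 1 hG G_1.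
rewrite mul1g in hx_y; apply: (mulIg c).
by rewrite mul1g -{1}wx -wy -hx_y eval_word_mul_central.
Qed.
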